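(* Suppose $P$ is a closed term of sort $(k,l)$. Then $\mathsf d_k\mathrel{;}P\otimes\mathsf I_k\ \sim\ \mathsf d_l\mathrel{;}\mathsf I_l\otimes P^\star$. Dually, $P\otimes\mathsf I_l\mathrel{;}\mathsf e_l\ \sim\ \mathsf I_k\otimes P^\star\mathrel{;}\mathsf e_k$. (Here $\otimes$ binds tighter than $;$.)
   Context: Wire calculus. Fix a set $\Sigma$ of signals and $\iota\notin\Sigma$; $L=\Sigma\cup\{\iota\}$; $\vec\iota$ denotes a word of $\iota$'s. Prefix strings are words over atoms: signal variables $x$, binders $\lambda x$, $\iota$, constants $\sigma\in\Sigma$. Terms: $P::= Y \mid P\mathrel{;}P\mid P\otimes P\mid \frac{u}{v}.P\mid P+P\mid \mu Y{:}\tau.P$ ($\tau$ a sort $(k,l)$). In $\frac{u}{v}.P$, variables $x$ with $\lambda x$ in $uv$ are bound (set $bd$). Sorting: $P:(k,n),R:(n,l)\Rightarrow P\mathrel{;}R:(k,l)$; $P:(k,l),Q:(m,n)\Rightarrow P\otimes Q:(k+m,l+n)$; $\frac{u}{v}.P:(|u|,|v|)$ when $P$ has that sort; $\mu Y{:}\tau.P:\tau$; $P+Q:\tau$ for $P,Q:\tau$. Closed terms only. Transitions $P\xrightarrow[\vec b]{\vec a}Q$ are generated by: (Refl) $P\xrightarrow[\vec\iota]{\vec\iota}P$; ($\iota$L) $P\xrightarrow[\vec\iota]{\vec\iota}R\xrightarrow[\vec b]{\vec a}Q$ gives $P\xrightarrow[\vec b]{\vec a}Q$; ($\iota$R) $P\xrightarrow[\vec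 b]{\vec a}R\xrightarrow[\vec\iota]{\vec\iota}Q$ gives $P\xrightarrow[\vec b]{\vec a}Q$; (Cut) $P\xrightarrow[\vec c]{\vec a}Q$, $R\xrightarrow[\vec b]{\vec c}S$ give $P\mathrel{;}R\xrightarrow[\vec b]{\vec a}Q\mathrel{;}S$; (Ten) $P\xrightarrow[\vec b]{\vec a}Q$, $R\xrightarrow[\vec d]{\vec c}S$ give $P\otimes R\xrightarrow[\vec b\vec d]{\vec a\vec c}Q\otimes S$; (Pref) for each $\sigma:bd\to L$, $\frac{u}{v}.P\xrightarrow[v|_\sigma]{u|_\sigma}P|_\sigma$; (Rec) $P[\mu Y.P/Y]\xrightarrow[\vec b]{\vec a}Q$ gives $\mu Y.P\xrightarrow[\vec b]{\vec a}Q$; ($+\iota$) $P\xrightarrow[\vec\iota]{\vec\iota}Q$, $R\xrightarrow[\vec\iota]{\vec\iota}S$ give $P+R\xrightarrow[\vec\iota]{\vec\iota}Q+S$; ($+$L/R) $P\xrightarrow[\vec b]{\vec a}Q$ with $\vec a\vec b$ not all $\iota$ gives $P+R\xrightarrow[\vec b]{\vec a}Q$ and $R+P\xrightarrow[\vec b]{\vec a}Q$. Bisimilarity $\sim$: $P\sim Q$ iff some relation $S\ni(P,Q)$ satisfies: if $(P',Q')\in S$ and $P'\xrightarrow[\vec b]{\vec a}P''$ then $Q'\xrightarrow[\vec b]{\vec a}Q''$ with $(P'',Q'')\in S$, and symmetrically. Constants: $\mathsf I_k=\mu Y.\frac{\lambda x_1\cdots\lambda x_k}{\lambda x_1\cdots\lambda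 x_k}.Y:(k,k)$, $\mathsf I=\mathsf I_1$; $\mathsf d=\mu Y.\frac{\epsilon}{\lambda x\lambda x}.Y:(0,2)$; $\mathsf e=\mu Y.\frac{\lambda x\lambda x}{\epsilon}.Y:(2,0)$; $\mathsf d_1=\mathsf d$, $\mathsf d_{n+1}=\mathsf d\mathrel{;}(\mathsf I\otimes\mathsf d_n\otimes\mathsf I)$; $\mathsf e_1=\mathsf e$, $\mathsf e_{n+1}=(\mathsf I_n\otimes\mathsf e\otimes\mathsf I_n)\mathrel{;}\mathsf e_n$; $\mathsf d_0=\mathsf e_0=\mathsf I_0=\mu Y{:}(0,0).Y$. The operation $(-)^\star$: on prefix strings it is string reversal (letters being the atoms $x$, $\lambda x$, $\iota$, $\sigma$); on terms it is defined by structural recursion: $Y^\star=Y$, $(R\mathrel{;}S)^\star=S^\star\mathrel{;}R^\star$, $(R\otimes S)^\star=S^\star\otimes R^\star$, $(\frac{u}{v}.R)^\star=\frac{v^\star}{u^\star}.R^\star$, $(R+S)^\star=R^\star+S^\star$, $(\mu Y.R)^\star=\mu Y.R^\star$. *)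

From mathcomp Require Import all_boot.
Set Implicit Arguments.
Unset Strict Implicit.
Unset Printing Implicit Defensive.

Section Wire.
Variable Sig : Type.

(* L = Sigma + {iota}; [None] is iota, [Some s] is the signal s *)
Definition L := option Sig.
Definition iotaL : L := None.
Definition iotas (n : nat) : seq L := nseq n iotaL.
Definition is_iota (a : L) : bool := if a is None then true else false.

(* atoms of prefix strings: signal variable x, binder lambda x, iota, constant *)
Inductive atom := AVar of nat | ABind of nat | AIota | AConst of Sig.

Inductive term :=
| TVar of nat
| Seq of term & term
| Ten of term & term
| Pre of seq atom & seq atom & term    (* u/v . P *)
| Sum of term & term
| Mu of nat & (nat * nat) & term.      (* mu Y : tau . P *)

Definition binders (w : seq atom) : seq nat :=
  flatten [seq (if a is ABind x then [:: x] else [::]) | a <- w].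

Definition atom_of (a : L) : atom := if a is Some s then AConst s else AIota.

Definition atom_sub (s : nat -> option L) (a : atom) : atom :=
  match a with
  | AVar x => if s x is Some v then atom_of v else AVar x
  | _ => a
  end.

Fixpoint ssub (s : nat -> option L) (P : term) : term :=
  match P with
  | TVar Y => TVar Y
  | Seq P1 P2 => Seq (ssub s P1) (ssub s P2)
  | Ten P1 P2 => Ten (ssub s P1) (ssub s P2)
  | Pre u v P1 =>
      let bd := binders (u ++ v) in
      let s' := fun x => if x \in bd then None else s x in
      Pre (map (atom_sub s') u) (map (atom_sub s') v) (ssub s' P1)
  | Sum P1 P2 => Sum (ssub s P1) (ssub s P2)
  | Mu Y t P1 => Mu Y t (ssub s P1)
  end.

Definition inst_atom (sigma : nat -> L) (a : atom) : L :=
  match a with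
  | AVar x => sigma x
  | ABind x => sigma x
  | AIota => iotaL
  | AConst c => Some c
  end.
Definition inst (sigma : nat -> L) (w : seq atom) : seq L := map (inst_atom sigma) w.

Definition body_inst (sigma : nat -> L) (u v : seq atom) (P : term) : term :=
  ssub (fun x => if x \in binders (u ++ v) then Some (sigma x) else None) P.

(* term substitution P[Q/Y] (used only with closed Q) *)
Fixpoint tsubst (Y : nat) (Q : term) (P : term) : term :=
  match P with
  | TVar Y' => if Y' == Y then Q else TVar Y'
  | Seq P1 P2 => Seq (tsubst Y Q P1) (tsubst Y Q P2)
  | Ten P1 P2 => Ten (tsubst Y Q P1) (tsubst Y Q P2)
  | Pre u v P1 => Pre u v (tsubst Y Q P1)
  | Sum P1 P2 => Sum (tsubst Y Q P1) (tsubst Y Q P2)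
  | Mu Y' t P1 => if Y' == Y then Mu Y' t P1 else Mu Y' t (tsubst Y Q P1)
  end.

Definition env := nat -> option (nat * nat).
Definition env0 : env := fun _ => None.
Definition upd (G : env) (Y : nat) (t : nat * nat) : env :=
  fun Z => if Z == Y then Some t else G Z.

Inductive has_sort : env -> term -> nat * nat -> Prop :=
| so_var G Y t : G Y = Some t -> has_sort G (TVar Y) t
| so_seq G P R k n l :
    has_sort G P (k, n) -> has_sort G R (n, l) -> has_sort G (Seq P R) (k, l)
| so_ten G P Q k l m n :
    has_sort G P (k, l) -> has_sort G Q (m, n) -> has_sort G (Ten P Q) (k + m, l + n)
| so_pre G u v P :
    has_sort G P (size u, size v) -> has_sort G (Pre u v P) (size u, size v)
| so_sum G P Q t : has_sort G P t -> has_sort G Q t -> has_sort G (Sum P Q) t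
| so_mu G Y t P : has_sort (upd G Y t) P t -> has_sort G (Mu Y t P) t.

Fixpoint sclosed (bound : seq nat) (P : term) : bool :=
  match P with
  | TVar _ => true
  | Seq P1 P2 | Ten P1 P2 | Sum P1 P2 => sclosed bound P1 && sclosed bound P2
  | Pre u v P1 =>
      let b := bound ++ binders (u ++ v) in
      all (fun a => if a is AVar x then x \in b else true) (u ++ v) && sclosed b P1
  | Mu _ _ P1 => sclosed bound P1
  end.

Fixpoint tclosed (bound : seq nat) (P : term) : bool :=
  match P with
  | TVar Y => Y \in bound
  | Seq P1 P2 | Ten P1 P2 | Sum P1 P2 => tclosed bound P1 && tclosed bound P2
  | Pre _ _ P1 => tclosed bound P1
  | Mu Y _ P1 => tclosed (Y :: bound) P1
  end.

Definition wclosed (P : term) : Prop := sclosed [::] P /\ tclosed [::] P.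

(* labelled transitions  step P a b Q  :  P --a (top) / b (bottom)--> Q *)
Inductive step : term -> seq L -> seq L -> term -> Prop :=
| st_refl P k l : has_sort env0 P (k, l) -> step P (iotas k) (iotas l) P
| st_iotaL P R Q m n a b :
    step P (iotas m) (iotas n) R -> step R a b Q -> step P a b Q
| st_iotaR P R Q m n a b :
    step P a b R -> step R (iotas m) (iotas n) Q -> step P a b Q
| st_cut P Q R S a b c :
    step P a c Q -> step R c b S -> step (Seq P R) a b (Seq Q S)
| st_ten P Q R S a b c d :
    step P a b Q -> step R c d S -> step (Ten P R) (a ++ c) (b ++ d) (Ten Q S)
| st_pre (sigma : nat -> L) u v P :
    step (Pre u v P) (inst sigma u) (inst sigma v) (body_inst sigma u v P)
| st_rec Y t P a b Q :
    step (tsubst Y (Mu Y t P) P) a b Q -> step (Mu Y t P) a b Q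
| st_sum_iota P Q R S m n :
    step P (iotas m) (iotas n) Q -> step R (iotas m) (iotas n) S ->
    step (Sum P R) (iotas m) (iotas n) (Sum Q S)
| st_sumL P R a b Q :
    step P a b Q -> ~~ all is_iota (a ++ b) -> step (Sum P R) a b Q
| st_sumR P R a b Q :
    step P a b Q -> ~~ all is_iota (a ++ b) -> step (Sum R P) a b Q.

Definition simulation (Rel : term -> term -> Prop) : Prop :=
  forall P Q, Rel P Q -> forall a b P', step P a b P' ->
    exists2 Q', step Q a b Q' & Rel P' Q'.

Definition bisim (P Q : term) : Prop :=
  exists Rel : term -> term -> Prop,
    [/\ Rel P Q, simulation Rel & simulation (fun x y => Rel y x)].

Definition I0 : term := Mu 0 (0, 0) (TVar 0).
Definition Ik (k : nat) : term :=
  if k is 0 then I0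
  else Mu 0 (k, k) (Pre (map ABind (iota 0 k)) (map ABind (iota 0 k)) (TVar 0)).
Definition I1 : term := Ik 1.
Definition dcon : term := Mu 0 (0, 2) (Pre [::] [:: ABind 0; ABind 0] (TVar 0)).
Definition econ : term := Mu 0 (2, 0) (Pre [:: ABind 0; ABind 0] [::] (TVar 0)).

Fixpoint dn (n : nat) : term :=
  match n with
  | 0 => I0
  | 1 => dcon
  | (m.+1 as n').+1 => Seq dcon (Ten (Ten I1 (dn n')) I1)
  end.

Fixpoint en (n : nat) : term :=
  match n with
  | 0 => I0
  | 1 => econ
  | (m.+1 as n').+1 => Seq (Ten (Ten (Ik n') econ) (Ik n')) (en n')
  end.

Fixpoint star (P : term) : term :=
  match P with
  | TVar Y => TVar Y
  | Seq R1 R2 => Seq (star R2) (star R1)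
  | Ten R1 R2 => Ten (star R2) (star R1)
  | Pre u v R => Pre (rev v) (rev u) (star R)
  | Sum R1 R2 => Sum (star R1) (star R2)
  | Mu Y (k, l) R => Mu Y (l, k) (star R)
  end.

End Wire.

From mathcomp Require Import all_boot zify.
Set Implicit Arguments.
Unset Strict Implicit.
Unset Printing Implicit Defensive.

(* The cup [dn k] is a process that keeps emitting [w ++ rev w] on its
   bottom wires, for arbitrary signals [w] of length [k], and [Ik k] passes
   its input through.  Hence a step of [dn k ; P (x) Ik k] is a step
   [P --w/b--> P'] of [P] together with the copy [rev w] travelling along
   the identity: its label is [b ++ rev w].  Since reversing labels turns
   steps of [P] into steps of [P^star], the other side can produce the same
   label by letting the cup emit [b ++ rev b] and [P^star] perform
   [rev b --> rev w].  This yields a bisimulation between the two families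
   of states, closed under the iota-chaining rules; the cap [en k] is
   symmetric, with labels of the form [w ++ rev w] on top. *)

Section WireCalculus.

Variable Sig : Type.

Local Notation term := (term Sig).
Local Notation atom := (atom Sig).
Local Notation L := (L Sig).
Local Notation iotas := (iotas Sig).
Local Notation I0 := (I0 Sig).
Local Notation Ik := (Ik Sig).
Local Notation dcon := (dcon Sig).
Local Notation econ := (econ Sig).
Local Notation dn := (dn Sig).
Local Notation en := (en Sig).

Implicit Types (P Q R S T X M N J : term) (a b c w : seq L).

(** * Sorting *)

Lemma has_sort_Seq_inv G P R s : has_sort G (Seq P R) s ->
  exists n, has_sort G P (s.1, n) /\ has_sort G R (n, s.2).
Proof. by move=> H; inversion H; subst; exists n. Qed.

Lemma has_sort_Ten_inv G P R s : has_sort G (Ten P R) s ->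
  exists k l m n, [/\ s = (k + m, l + n), has_sort G P (k, l) & has_sort G R (m, n)].
Proof. by move=> H; inversion H; subst; exists k, l, m, n. Qed.

Lemma has_sort_Pre_inv G u v P s : has_sort G (Pre u v P) s ->
  s = (size u, size v) /\ has_sort G P s.
Proof. by move=> H; inversion H; subst. Qed.

Lemma has_sort_Sum_inv G P R s : has_sort G (Sum P R) s ->
  has_sort G P s /\ has_sort G R s.
Proof. by move=> H; inversion H; subst. Qed.

Lemma has_sort_Mu_inv G Y t P s : has_sort G (Mu Y t P) s ->
  s = t /\ has_sort (upd G Y t) P s.
Proof. by move=> H; inversion H; subst. Qed.

Lemma has_sort_Var_inv G Y s : has_sort G (TVar Sig Y) s -> G Y = Some s.
Proof. by move=> H; inversion H. Qed.

Lemma has_sort_Pre G u v P k l :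
  size u = k -> size v = l -> has_sort G P (k, l) -> has_sort G (Pre u v P) (k, l).
Proof. by move=> <- <-; apply: so_pre. Qed.

Lemma has_sort_uniq G P s s' : has_sort G P s -> has_sort G P s' -> s = s'.
Proof.
move=> HP; elim: HP s' => {G P s}.
- by move=> G Y t H s' /has_sort_Var_inv; congruence.
- move=> G P R k n l _ IHP _ IHR [k' l'] /has_sort_Seq_inv /= [n' [/IHP [<- <-]]].
  by move/IHR=> [->].
- move=> G P Q k l m n _ IHP _ IHQ s' /has_sort_Ten_inv.
  by move=> [k' [l' [m' [n' [-> /IHP [<- <-] /IHQ [<- <-]]]]]].
- by move=> G u v P _ _ s' /has_sort_Pre_inv [].
- by move=> G P Q t _ IHP _ _ s' /has_sort_Sum_inv [/IHP].
- by move=> G Y t P _ _ s' /has_sort_Mu_inv [].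
Qed.

Lemma has_sort_weaken G G' P s :
  (forall Y t, G Y = Some t -> G' Y = Some t) -> has_sort G P s -> has_sort G' P s.
Proof.
move=> + HP; elim: HP G' => {G P s}.
- by move=> G Y t H G' HG; apply/so_var/HG.
- by move=> G P R k n l _ IHP _ IHR G' HG; apply: so_seq (IHP _ HG) (IHR _ HG).
- by move=> G P Q k l m n _ IHP _ IHQ G' HG; apply: so_ten (IHP _ HG) (IHQ _ HG).
- by move=> G u v P _ IH G' HG; apply/so_pre/IH.
- by move=> G P Q t _ IHP _ IHQ G' HG; apply: so_sum (IHP _ HG) (IHQ _ HG).
- move=> G Y t P _ IH G' HG; apply/so_mu/IH => Z u; rewrite /upd.
  by case: (Z == Y) => //; apply: HG.
Qed.

Lemma has_sort_tsubst G G' P Q Y t s : has_sort G P s ->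
  G Y = Some t -> has_sort env0 Q t ->
  (forall Z u, Z <> Y -> G Z = Some u -> G' Z = Some u) ->
  has_sort G' (tsubst Y Q P) s.
Proof.
move=> HP; elim: HP G' Y t => {G P s}.
- move=> G Y' t H G' Y t0 HY HQ HG /=; case: eqP => [E|ne].
  + subst Y'; rewrite HY in H; case: H => <-.
    exact: has_sort_weaken HQ.
  + exact/so_var/HG.
- move=> G P R k n l _ IHP _ IHR G' Y t HY HQ HG.
  exact: so_seq (IHP _ _ _ HY HQ HG) (IHR _ _ _ HY HQ HG).
- move=> G P R k l m n _ IHP _ IHR G' Y t HY HQ HG.
  exact: so_ten (IHP _ _ _ HY HQ HG) (IHR _ _ _ HY HQ HG).
- by move=> G u v P _ IH G' Y t HY HQ HG; apply/so_pre/(IH _ _ _ HY HQ HG).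
- move=> G P R t' _ IHP _ IHR G' Y t HY HQ HG.
  exact: so_sum (IHP _ _ _ HY HQ HG) (IHR _ _ _ HY HQ HG).
- move=> G Y' t' P HP IH G' Y t HY HQ HG /=; case: eqP => [E|ne]; apply: so_mu.
  + subst Y'; apply: has_sort_weaken HP => Z u; rewrite /upd.
    by case: eqP => // ne; apply: HG.
  + apply: (IH _ Y t) => //; first by rewrite /upd; case: eqP => // E; case: ne.
    by move=> Z u nZ; rewrite /upd; case: eqP => // _; apply: HG.
Qed.

Lemma has_sort_ssub G P f s : has_sort G P s -> has_sort G (ssub f P) s.
Proof.
move=> HP; elim: HP f => {G P s} /=.
- by move=> G Y t H f; apply: so_var.
- by move=> G P R k n l _ IHP _ IHR f; apply: so_seq (IHP f) (IHR f).
- by move=> G P Q k l m n _ IHP _ IHQ f; apply: so_ten (IHP f) (IHQ f).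
- by move=> G u v P _ IH f; apply: has_sort_Pre; rewrite ?size_map.
- by move=> G P Q t _ IHP _ IHQ f; apply: so_sum.
- by move=> G Y t P _ IH f; apply: so_mu.
Qed.

Definition unfold P : term := if P is Mu Y t R then tsubst Y P R else P.

Lemma has_sort_unfold P s : has_sort env0 P s -> has_sort env0 (unfold P) s.
Proof.
case: P => // Y t R HP /=; case/has_sort_Mu_inv: (HP) => Es HR; subst s.
apply: (has_sort_tsubst HR _ HP); first by rewrite /upd eqxx.
by move=> Z u nZ; rewrite /upd; case: eqP.
Qed.

Lemma step_sort P a b Q k l : step P a b Q -> has_sort env0 P (k, l) ->
  [/\ size a = k, size b = l & has_sort env0 Q (k, l)].
Proof.
move=> HS; elim: HS k l => {P a b Q}.
- move=> P k l H k' l' /(has_sort_uniq H) [<- <-].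
  by rewrite /iotas !size_nseq.
- by move=> P R Q m n a b _ IH1 _ IH2 k l /IH1 [_ _ /IH2].
- move=> P R Q m n a b _ IH1 _ IH2 k l /IH1 [-> -> HR].
  by have [_ _ HQ] := IH2 _ _ HR.
- move=> P Q R S a b c _ IH1 _ IH2 k l /has_sort_Seq_inv [n [/IH1 [-> <- HQ]]].
  by move=> /IH2 [_ -> HS]; split=> //; apply: so_seq HQ HS.
- move=> P Q R S a b c d _ IH1 _ IH2 k' l' /has_sort_Ten_inv.
  move=> [k [l [m [n [[-> ->] /IH1 [<- <- HQ] /IH2 [<- <- HS]]]]]].
  by rewrite !size_cat; split=> //; apply: so_ten.
- move=> sigma u v P k l /has_sort_Pre_inv [[-> ->] H].
  by rewrite !size_map; split=> //; apply: has_sort_ssub.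
- by move=> Y t P a b Q _ IH k l /(has_sort_unfold (P := Mu Y t P)) /IH.
- move=> P Q R S m n _ IH1 _ IH2 k l /has_sort_Sum_inv [/IH1 [-> -> HQ] /IH2 [_ _ HS]].
  by split=> //; apply: so_sum.
- by move=> P R a b Q _ IH _ k l /has_sort_Sum_inv [/IH].
- by move=> P R a b Q _ IH _ k l /has_sort_Sum_inv [_ /IH].
Qed.

(** * Reversal *)

Lemma ssub_ext P f g : f =1 g -> ssub f P = ssub g P.
Proof.
elim: P f g => //=.
- by move=> P1 IH1 P2 IH2 f g H; rewrite (IH1 f g H) (IH2 f g H).
- by move=> P1 IH1 P2 IH2 f g H; rewrite (IH1 f g H) (IH2 f g H).
- move=> u v P IH f g H.
  have H' : (fun x => if x \in binders (u ++ v) then None else f x) =1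
            (fun x => if x \in binders (u ++ v) then None else g x) by move=> x; rewrite H.
  by rewrite (IH _ _ H'); congr Pre; apply: eq_map => -[] //= x; rewrite H'.
- by move=> P1 IH1 P2 IH2 f g H; rewrite (IH1 f g H) (IH2 f g H).
- by move=> Y t P IH f g H; rewrite (IH f g H).
Qed.

Lemma binders_cat (u v : seq atom) : binders (u ++ v) = binders u ++ binders v.
Proof. by rewrite /binders map_cat flatten_cat. Qed.

Lemma binders_rev (w : seq atom) : binders (rev w) = rev (binders w).
Proof.
elim: w => // a w IH; rewrite rev_cons -cats1 binders_cat IH -cat1s binders_cat rev_cat.
by case: a.
Qed.

Lemma mem_binders_rev (u v : seq atom) x :
  (x \in binders (rev v ++ rev u)) = (x \in binders (u ++ v)).
Proof. by rewrite !binders_cat !binders_rev !mem_cat !mem_rev orbC. Qed.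

Lemma star_ssub P f : star (ssub f P) = ssub f (star P).
Proof.
elim: P f => //=.
- by move=> P1 IH1 P2 IH2 f; rewrite IH1 IH2.
- by move=> P1 IH1 P2 IH2 f; rewrite IH1 IH2.
- move=> u v P IH f; rewrite IH !map_rev; congr Pre.
  + by congr rev; apply: eq_map => -[] //= x; rewrite mem_binders_rev.
  + by congr rev; apply: eq_map => -[] //= x; rewrite mem_binders_rev.
  + by apply: ssub_ext => x; rewrite mem_binders_rev.
- by move=> P1 IH1 P2 IH2 f; rewrite IH1 IH2.
- by move=> Y [k l] P IH f; rewrite IH.
Qed.

Lemma star_tsubst P Q Y : star (tsubst Y Q P) = tsubst Y (star Q) (star P).
Proof.
elim: P => //=.
- by move=> Y'; case: (Y' == Y).
- by move=> P1 IH1 P2 IH2; rewrite IH1 IH2.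
- by move=> P1 IH1 P2 IH2; rewrite IH1 IH2.
- by move=> u v P IH; rewrite IH.
- by move=> P1 IH1 P2 IH2; rewrite IH1 IH2.
- by move=> Y' [k l] P IH /=; case: (Y' == Y) => //=; rewrite IH.
Qed.

Lemma starK : involutive (@star Sig).
Proof.
elim=> //=.
- by move=> P1 IH1 P2 IH2; rewrite IH1 IH2.
- by move=> P1 IH1 P2 IH2; rewrite IH1 IH2.
- by move=> u v P IH; rewrite IH !revK.
- by move=> P1 IH1 P2 IH2; rewrite IH1 IH2.
- by move=> Y [k l] P IH /=; rewrite IH.
Qed.

Definition swap_env (G : env) : env := fun Y => omap (fun t => (t.2, t.1)) (G Y).

Lemma has_sort_star G G' P s : G' =1 swap_env G ->
  has_sort G P s -> has_sort G' (star P) (s.2, s.1).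
Proof.
move=> + HP; elim: HP G' => {G P s} /=.
- by move=> G Y t H G' HG; apply: so_var; rewrite HG /swap_env H.
- by move=> G P R k n l _ IHP _ IHR G' HG; apply: so_seq (IHR _ HG) (IHP _ HG).
- move=> G P Q k l m n _ IHP _ IHQ G' HG; rewrite [l + n]addnC [k + m]addnC.
  exact: so_ten (IHQ _ HG) (IHP _ HG).
- move=> G u v P _ IH G' HG; apply: has_sort_Pre; rewrite ?size_rev //.
  exact: IH.
- by move=> G P Q t _ IHP _ IHQ G' HG; apply: so_sum (IHP _ HG) (IHQ _ HG).
- move=> G Y [k l] P _ IH G' HG /=; apply/so_mu/IH => Z.
  by rewrite /upd /swap_env; case: eqP => // _; rewrite HG.
Qed.

Lemma has_sort_star0 P k l :
  has_sort env0 P (k, l) -> has_sort env0 (star P) (l, k).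
Proof. exact: has_sort_star. Qed.

Lemma step_star P a b Q : step P a b Q -> step (star P) (rev b) (rev a) (star Q).
Proof.
elim=> {P a b Q} /=.
- by move=> P k l H; rewrite /iotas !rev_nseq; apply/st_refl/has_sort_star0.
- by move=> P R Q m n a b _ IH1 _ IH2; rewrite /iotas !rev_nseq in IH1; apply: st_iotaL IH1 IH2.
- by move=> P R Q m n a b _ IH1 _ IH2; rewrite /iotas !rev_nseq in IH2; apply: st_iotaR IH1 IH2.
- by move=> P Q R S a b c _ IH1 _ IH2; apply: st_cut IH2 IH1.
- by move=> P Q R S a b c d _ IH1 _ IH2; rewrite !rev_cat; apply: st_ten IH2 IH1.
- move=> sigma u v P; rewrite /inst -!map_rev /body_inst star_ssub.
  rewrite (ssub_ext _ (g := fun x => if x \in binders (rev v ++ rev u)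
                                     then Some (sigma x) else None)); last first.
    by move=> x; rewrite mem_binders_rev.
  exact: (st_pre sigma (rev v) (rev u) (star P)).
- by move=> Y [k l] P a b Q _ IH /=; apply: st_rec; rewrite star_tsubst in IH.
- move=> P Q R S m n _ IH1 _ IH2; rewrite /iotas !rev_nseq in IH1 IH2 *.
  exact: st_sum_iota IH1 IH2.
- by move=> P R a b Q _ IH Hn; apply: st_sumL IH _; rewrite all_cat !all_rev andbC -all_cat.
- by move=> P R a b Q _ IH Hn; apply: st_sumR IH _; rewrite all_cat !all_rev andbC -all_cat.
Qed.

Lemma iotas_cat n (a1 a2 : seq L) : iotas n = a1 ++ a2 ->
  a1 = iotas (size a1) /\ a2 = iotas (size a2).
Proof.
elim: a1 n => [|x a1 IH] n /=; first by move=> <-; rewrite /iotas size_nseq.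
by case: n => [|n] //= [<- /IH [E1 E2]]; split=> //; rewrite -E1.
Qed.

(* Iota steps of a tensor split into iota steps of its factors, so the
   iota-chaining rules never merge the two components. *)
Lemma step_Ten_inv (X Y : term) a b Q : step (Ten X Y) a b Q ->
  exists a1 a2 b1 b2 X' Y', [/\ a = a1 ++ a2, b = b1 ++ b2, Q = Ten X' Y',
    step X a1 b1 X' & step Y a2 b2 Y'].
Proof.
move E: (Ten X Y) => T H; elim: H X Y E => {T a b Q} //.
- move=> P k l H X Y E; subst P; have [k1 [l1 [k2 [l2 [[-> ->] H1 H2]]]]] := has_sort_Ten_inv H.
  exists (iotas k1), (iotas k2), (iotas l1), (iotas l2), X, Y.
  by split; rewrite /iotas ?nseqD //; apply: st_refl.
- move=> P R Q m n a b _ IH1 _ IH2 X Y E.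
  have [a1 [a2 [b1 [b2 [X1 [Y1 [Ea Eb ER S1 S2]]]]]]] := IH1 _ _ E.
  have [a1' [a2' [b1' [b2' [X2 [Y2 [-> -> -> S1' S2']]]]]]] := IH2 _ _ (esym ER).
  have [Ea1 Ea2] := iotas_cat Ea; have [Eb1 Eb2] := iotas_cat Eb.
  exists a1', a2', b1', b2', X2, Y2; split=> //.
  + by rewrite Ea1 Eb1 in S1; apply: st_iotaL S1 S1'.
  + by rewrite Ea2 Eb2 in S2; apply: st_iotaL S2 S2'.
- move=> P R Q m n a b _ IH1 _ IH2 X Y E.
  have [a1 [a2 [b1 [b2 [X1 [Y1 [-> -> ER S1 S2]]]]]]] := IH1 _ _ E.
  have [a1' [a2' [b1' [b2' [X2 [Y2 [Ea Eb -> S1' S2']]]]]]] := IH2 _ _ (esym ER).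
  have [Ea1 Ea2] := iotas_cat Ea; have [Eb1 Eb2] := iotas_cat Eb.
  exists a1, a2, b1, b2, X2, Y2; split=> //.
  + by rewrite Ea1 Eb1 in S1'; apply: st_iotaR S1 S1'.
  + by rewrite Ea2 Eb2 in S2'; apply: st_iotaR S2 S2'.
- by move=> P Q R S a b c d S1 _ S2 _ X Y [-> ->]; exists a, c, b, d, Q, S.
Qed.

Lemma step_Ten_split_top (X Y : term) w w' b S k l :
  has_sort env0 X (k, l) -> size w = k -> step (Ten X Y) (w ++ w') b S ->
  exists b1 b2 X' Y', [/\ b = b1 ++ b2, S = Ten X' Y', step X w b1 X' & step Y w' b2 Y'].
Proof.
move=> HX Hw /step_Ten_inv [a1 [a2 [b1 [b2 [X' [Y' [Ea -> -> SX SY]]]]]]].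
have [Ha1 _ _] := step_sort SX HX.
have Ew : w = a1 by rewrite -(take_size_cat w' Hw) Ea take_size_cat.
have Ew' : w' = a2 by rewrite -(drop_size_cat w' Hw) Ea drop_size_cat.
by exists b1, b2, X', Y'; rewrite Ew Ew'.
Qed.

Lemma step_Ten_split_bot (X Y : term) a w w' S k l :
  has_sort env0 X (k, l) -> size w = l -> step (Ten X Y) a (w ++ w') S ->
  exists a1 a2 X' Y', [/\ a = a1 ++ a2, S = Ten X' Y', step X a1 w X' & step Y a2 w' Y'].
Proof.
move=> HX Hw /step_Ten_inv [a1 [a2 [b1 [b2 [X' [Y' [-> Eb -> SX SY]]]]]]].
have [_ Hb1 _] := step_sort SX HX.
have Ew : w = b1 by rewrite -(take_size_cat w' Hw) Eb take_size_cat.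
have Ew' : w' = b2 by rewrite -(drop_size_cat w' Hw) Eb drop_size_cat.
by exists a1, a2, X', Y'; rewrite Ew Ew'.
Qed.

(* [unrolled M N]: [N] is [M] with some of the recursions at its leaves
   unfolded once; these are the states reachable from the constants. *)
Inductive unrolled : term -> term -> Prop :=
| unrolled_refl M : unrolled M M
| unrolled_unfold M : unrolled M (unfold M)
| unrolled_Seq P P' R R' : unrolled P P' -> unrolled R R' -> unrolled (Seq P R) (Seq P' R')
| unrolled_Ten P P' R R' : unrolled P P' -> unrolled R R' -> unrolled (Ten P R) (Ten P' R').

Hint Resolve unrolled_refl : core.

Lemma unrolled_sort M N s : unrolled M N -> has_sort env0 M s -> has_sort env0 N s.
Proof.
move=> HMN; elim: HMN s => {M N} //.
- by move=> M s /has_sort_unfold.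
- move=> P P' R R' _ IHP _ IHR [k l] /has_sort_Seq_inv [n [/IHP HP /IHR HR]].
  exact: so_seq HP HR.
- move=> P P' R R' _ IHP _ IHR s /has_sort_Ten_inv [k [l [m [n [-> /IHP HP /IHR HR]]]]].
  exact: so_ten HP HR.
Qed.

Lemma unrolled_Mu_inv Y t P N : unrolled (Mu Y t P) N ->
  N = Mu Y t P \/ N = tsubst Y (Mu Y t P) P.
Proof. by move=> H; inversion H; [left | right]. Qed.

Lemma unrolled_Seq_inv P R N : unrolled (Seq P R) N ->
  exists P' R', [/\ N = Seq P' R', unrolled P P' & unrolled R R'].
Proof. by move=> H; inversion H; subst; do 2 eexists. Qed.

Lemma unrolled_Ten_inv P R N : unrolled (Ten P R) N ->
  exists P' R', [/\ N = Ten P' R', unrolled P P' & unrolled R R'].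
Proof. by move=> H; inversion H; subst; do 2 eexists. Qed.

Lemma I0_sort G : has_sort G I0 (0, 0).
Proof. by apply/so_mu/so_var; rewrite /upd eqxx. Qed.

Lemma unrolled_I0 J : unrolled I0 J -> J = I0.
Proof. by case/unrolled_Mu_inv. Qed.

Lemma I0_step J a b J' : step J a b J' -> J = I0 -> [/\ a = [::], b = [::] & J' = I0].
Proof.
elim=> {J a b J'} //.
- by move=> J k l HJ EJ; rewrite EJ in HJ; have [<- <-] := has_sort_uniq (I0_sort _) HJ.
- by move=> P R Q m n a b _ IH1 _ IH2 /IH1 [_ _ /IH2].
- by move=> P R Q m n a b _ IH1 _ IH2 /IH1 [-> -> /IH2 [_ _ ->]].
- by move=> Y t P a b Q _ IH [EY Et EP]; subst; apply: IH.
Qed.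

(* [Ik k.+1], [dcon] and [econ] are all of the form [loop t u v]: a recursion
   around a single prefix made of binders only. *)
Definition loop t (u v : seq atom) : term := Mu 0 t (Pre u v (TVar Sig 0)).

Definition is_bind (x : atom) : bool := if x is ABind _ then true else false.

Lemma inst_iota_bind (s : seq atom) :
  all is_bind s -> inst (fun _ => iotaL Sig) s = iotas (size s).
Proof. by elim: s => //= -[] //= x s IH /IH ->. Qed.

Section Loop.

Variables (t : nat * nat) (u v : seq atom).
Hypothesis uv_bind : all is_bind (u ++ v).

Lemma ssub_loop f : ssub f (loop t u v) = loop t u v.
Proof.
have sub_bind s : all is_bind s -> forall g, map (atom_sub g) s = s.
  by elim: s => //= -[] //= x s IH /IH E g; rewrite E.
by move: uv_bind; rewrite all_cat => /andP [Hu Hv] /=; rewrite !sub_bind.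
Qed.

Lemma unrolled_loop_inv J : unrolled (loop t u v) J -> J = loop t u v \/ J = Pre u v (loop t u v).
Proof. exact: unrolled_Mu_inv. Qed.

Lemma loop_sort G : t = (size u, size v) -> has_sort G (loop t u v) t.
Proof. by move=> ->; apply/so_mu/so_pre/so_var; rewrite /upd eqxx. Qed.

Lemma loop_step J a b J' : t = (size u, size v) ->
  unrolled (loop t u v) J -> step J a b J' ->
  (exists sigma, a = inst sigma u /\ b = inst sigma v) /\ unrolled (loop t u v) J'.
Proof.
move=> Et HJ HS; elim: HS HJ => {J a b J'}.
- move=> J k l HJs HJ; split=> //.
  have := has_sort_uniq (unrolled_sort HJ (loop_sort _ Et)) HJs.
  move: uv_bind; rewrite all_cat Et => /andP [Hu Hv] [<- <-].
  by exists (fun _ => iotaL Sig); rewrite !inst_iota_bind.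
- by move=> P R Q m n a b _ IH1 _ IH2 /IH1 [_ /IH2].
- by move=> P R Q m n a b _ IH1 _ IH2 /IH1 [Hab /IH2 []].
- by move=> P Q R S a b c _ _ _ _ /unrolled_loop_inv [].
- by move=> P Q R S a b c d _ _ _ _ /unrolled_loop_inv [].
- move=> sigma u' v' P /unrolled_loop_inv [//|[-> -> ->]].
  by split; [exists sigma | rewrite /body_inst ssub_loop].
- move=> Y t' P a b Q _ IH /unrolled_loop_inv [[EY Et' EP]|//]; subst Y t' P.
  exact/IH/(unrolled_unfold (loop t u v)).
- by move=> P Q R S m n _ _ _ _ /unrolled_loop_inv [].
- by move=> P R a b Q _ _ _ /unrolled_loop_inv [].
- by move=> P R a b Q _ _ _ /unrolled_loop_inv [].
Qed.

Lemma loop_go sigma J :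
  unrolled (loop t u v) J -> step J (inst sigma u) (inst sigma v) (loop t u v).
Proof.
have S : step (Pre u v (loop t u v)) (inst sigma u) (inst sigma v) (loop t u v).
  by have := st_pre sigma u v (loop t u v); rewrite /body_inst ssub_loop.
by case/unrolled_loop_inv => ->; first apply: st_rec.
Qed.

End Loop.

Lemma Ik_bind n : all is_bind (map (@ABind Sig) (iota 0 n) ++ map (@ABind Sig) (iota 0 n)).
Proof. by rewrite all_cat andbb all_map; apply/allP. Qed.

Lemma Ik_sort G k : has_sort G (Ik k) (k, k).
Proof.
case: k => [|k]; first exact: I0_sort.
by apply: loop_sort; rewrite size_map size_iota.
Qed.

Lemma id_step k J a b J' : unrolled (Ik k) J -> step J a b J' ->
  [/\ a = b, size a = k & unrolled (Ik k) J'].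
Proof.
case: k => [|k] HJ HS.
  by have [-> -> ->] := I0_step HS (unrolled_I0 HJ).
have [|[sigma [-> ->]] HJ'] := loop_step (Ik_bind k.+1) _ HJ HS.
  by rewrite size_map size_iota.
by rewrite size_map size_map size_iota.
Qed.

Lemma id_go k J w : unrolled (Ik k) J -> size w = k -> step J w w (Ik k).
Proof.
case: k => [|k] HJ Hw.
  by rewrite (unrolled_I0 HJ); case: w Hw => // _; exact: (st_refl (I0_sort env0)).
have Ew : inst (nth (iotaL Sig) w) (map (@ABind Sig) (iota 0 k.+1)) = w.
  by rewrite /inst -map_comp -Hw; apply: mkseq_nth.
by have := loop_go (Ik_bind _) (nth (iotaL Sig) w) HJ; rewrite Ew.
Qed.

(** * Cups and caps *)

Lemma dcon_sort : has_sort env0 dcon (0, 2).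
Proof. exact: loop_sort. Qed.

Lemma econ_sort : has_sort env0 econ (2, 0).
Proof. exact: loop_sort. Qed.

Lemma cup1_step D a b D' : unrolled dcon D -> step D a b D' ->
  [/\ a = [::], exists x, b = [:: x; x] & unrolled dcon D'].
Proof.
move=> HD HS; have [[sigma [-> ->]] HD'] :=
  loop_step (u := [::]) (v := [:: ABind Sig 0; ABind Sig 0]) erefl erefl HD HS.
by split=> //; exists (sigma 0).
Qed.

Lemma cap1_step E a b E' : unrolled econ E -> step E a b E' ->
  [/\ b = [::], exists x, a = [:: x; x] & unrolled econ E'].
Proof.
move=> HE HS; have [[sigma [-> ->]] HE'] :=
  loop_step (u := [:: ABind Sig 0; ABind Sig 0]) (v := [::]) erefl erefl HE HS.
by split=> //; exists (sigma 0).
Qed.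

Lemma cup1_go D x : unrolled dcon D -> step D [::] [:: x; x] dcon.
Proof. exact: (loop_go (u := [::]) (v := [:: ABind Sig 0; ABind Sig 0]) erefl (fun _ => x)). Qed.

Lemma cap1_go E x : unrolled econ E -> step E [:: x; x] [::] econ.
Proof. exact: (loop_go (u := [:: ABind Sig 0; ABind Sig 0]) (v := [::]) erefl (fun _ => x)). Qed.

Lemma dn_sort k : has_sort env0 (dn k) (0, k + k).
Proof.
elim: k => [|[|k] IH]; [exact: I0_sort | exact: dcon_sort |].
have HT := so_ten (so_ten (Ik_sort env0 1) IH) (Ik_sort env0 1).
have -> : k.+2 + k.+2 = 1 + (k.+1 + k.+1) + 1 by lia.
exact: so_seq dcon_sort HT.
Qed.

Lemma en_sort k : has_sort env0 (en k) (k + k, 0).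
Proof.
elim: k => [|[|k] IH]; [exact: I0_sort | exact: econ_sort |].
have HT := so_ten (so_ten (Ik_sort env0 k.+1) econ_sort) (Ik_sort env0 k.+1).
rewrite addn0 in HT; have -> : k.+2 + k.+2 = k.+1 + 2 + k.+1 by lia.
exact: so_seq HT IH.
Qed.

Definition cup_label k a b := a = [::] /\ exists2 w, size w = k & b = w ++ rev w.
Definition cap_label k a b := b = [::] /\ exists2 w, size w = k & a = w ++ rev w.

(* [Lab] needs no composition law: chaining a step with an iota step keeps the
   label of the former. *)
Lemma seq_step_closed (Inv : term -> Prop) (Lab : seq L -> seq L -> Prop) :
  (forall S, Inv S -> exists P R, S = Seq P R) ->
  (forall S k l, Inv S -> has_sort env0 S (k, l) -> Lab (iotas k) (iotas l)) ->
  (forall P R a c b Q S, Inv (Seq P R) -> step P a c Q -> step R c b S ->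
     Lab a b /\ Inv (Seq Q S)) ->
  forall S a b S', Inv S -> step S a b S' -> Lab a b /\ Inv S'.
Proof.
move=> Iseq Irefl Icut S a b S' + HS; elim: HS => {S a b S'}.
- by move=> S k l HS IS; split=> //; apply: Irefl HS.
- by move=> P R Q m n a b _ IH1 _ IH2 /IH1 [_ /IH2].
- by move=> P R Q m n a b _ IH1 _ IH2 /IH1 [Hab /IH2 []].
- by move=> P Q R S a b c SP _ SR _ HI; apply: Icut HI SP SR.
- by move=> P Q R S a b c d _ _ _ _ /Iseq [? [? ?]].
- by move=> sigma u v P /Iseq [? [? ?]].
- by move=> Y t P a b Q _ _ /Iseq [? [? ?]].
- by move=> P Q R S m n _ _ _ _ /Iseq [? [? ?]].
- by move=> P R a b Q _ _ _ /Iseq [? [? ?]].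
- by move=> P R a b Q _ _ _ /Iseq [? [? ?]].
Qed.

Lemma cup_step k D a b D' : unrolled (dn k) D -> step D a b D' ->
  cup_label k a b /\ unrolled (dn k) D'.
Proof.
elim: k D a b D' => [|[|k] IH] D a b D' HD HS.
- have [<- /size0nil -> HD'] := id_step (k := 0) HD HS.
  by split=> //; split=> //; exists [::].
- have [-> [x ->] HD'] := cup1_step HD HS.
  by split=> //; split=> //; exists [:: x].
apply: (seq_step_closed _ _ _ HD HS) => {D a b D' HD HS}.
- by move=> S /unrolled_Seq_inv [P [R [-> _ _]]]; exists P, R.
- move=> S k' l' HS /(has_sort_uniq (unrolled_sort HS (dn_sort _))) [<- <-].
  by split=> //; exists (iotas k.+2); rewrite /iotas ?size_nseq // rev_nseq -nseqD.
move=> P R a c b Q S /unrolled_Seq_inv [P1 [R1 [[<- <-] HP]]].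
case/unrolled_Ten_inv=> [T1 [J2 [-> /unrolled_Ten_inv [J1 [D1 [-> HJ1 HD1]]] HJ2]]] SP SR.
have [-> [x Ec] HQ] := cup1_step HP SP.
have HJ1s := unrolled_sort HJ1 (Ik_sort env0 1).
have HJDs := so_ten HJ1s (unrolled_sort HD1 (dn_sort k.+1)).
rewrite Ec in SR.
have [b1 [b2 [T' [J2' [-> -> ST SJ2]]]]] :=
  step_Ten_split_top (w := [:: x]) (w' := [:: x]) HJDs erefl SR.
have [<- _ HJ2'] := id_step HJ2 SJ2.
have [b11 [b12 [J1' [D1' [-> -> SJ1 SD1]]]]] :=
  step_Ten_split_top (w := [:: x]) (w' := [::]) HJ1s erefl ST.
have [<- _ HJ1'] := id_step HJ1 SJ1.
have [[_ [w Hw ->]] HD1'] := IH _ _ _ _ HD1 SD1.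
split; last exact: unrolled_Seq HQ (unrolled_Ten (unrolled_Ten HJ1' HD1') HJ2').
split=> //; exists (x :: w); first by rewrite /= Hw.
by rewrite rev_cons -cats1 -!catA.
Qed.

Lemma cap_step k E a b E' : unrolled (en k) E -> step E a b E' ->
  cap_label k a b /\ unrolled (en k) E'.
Proof.
elim: k E a b E' => [|[|k] IH] E a b E' HE HS.
- have [<- /size0nil -> HE'] := id_step (k := 0) HE HS.
  by split=> //; split=> //; exists [::].
- have [-> [x ->] HE'] := cap1_step HE HS.
  by split=> //; split=> //; exists [:: x].
apply: (seq_step_closed _ _ _ HE HS) => {E a b E' HE HS}.
- by move=> S /unrolled_Seq_inv [P [R [-> _ _]]]; exists P, R.
- move=> S k' l' HS /(has_sort_uniq (unrolled_sort HS (en_sort _))) [<- <-].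
  by split=> //; exists (iotas k.+2); rewrite /iotas ?size_nseq // rev_nseq -nseqD.
move=> P R a c b Q S /unrolled_Seq_inv [P1 [R1 [[<- <-]]]].
case/unrolled_Ten_inv=> [T1 [J2 [-> /unrolled_Ten_inv [J1 [E1 [-> HJ1 HE1]]] HJ2]]] HR SP SR.
have [[-> [w Hw Ec]] HS] := IH _ _ _ _ HR SR.
have HJ1s := unrolled_sort HJ1 (Ik_sort env0 k.+1).
have HJEs := so_ten HJ1s (unrolled_sort HE1 econ_sort).
rewrite Ec in SP.
have [a1 [a2 [T' [J2' [-> -> ST SJ2]]]]] :=
  step_Ten_split_bot HJEs (etrans Hw (esym (addn0 _))) SP.
have [-> _ HJ2'] := id_step HJ2 SJ2.
rewrite -[w]cats0 in ST.
have [a11 [a12 [J1' [E1' [-> -> SJ1 SE1]]]]] := step_Ten_split_bot HJ1s Hw ST.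
have [-> _ HJ1'] := id_step HJ1 SJ1.
have [_ [x ->] HE1'] := cap1_step HE1 SE1.
split; last exact: unrolled_Seq (unrolled_Ten (unrolled_Ten HJ1' HE1') HJ2') HS.
split=> //; exists (rcons w x); first by rewrite size_rcons Hw.
by rewrite rev_rcons -cats1 -!catA.
Qed.

Lemma cup_go k D w : unrolled (dn k) D -> size w = k -> step D [::] (w ++ rev w) (dn k).
Proof.
elim: k D w => [|[|k] IH] D w HD.
- by move/size0nil ->; apply: (id_go (k := 0) HD).
- by case: w => [|x [|]] // _; apply: cup1_go.
case: w => [|x w] // [Hw].
case/unrolled_Seq_inv: HD => [D1 [R [-> HD1]]].
case/unrolled_Ten_inv=> [T [J2 [-> /unrolled_Ten_inv [J1 [D' [-> HJ1 HD']]] HJ2]]].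
have -> : (x :: w) ++ rev (x :: w) = ([:: x] ++ (w ++ rev w)) ++ [:: x].
  by rewrite rev_cons -cats1 -!catA.
apply: st_cut (cup1_go x HD1) _.
have HJ1x := id_go (w := [:: x]) HJ1 erefl; have HJ2x := id_go (w := [:: x]) HJ2 erefl.
exact: st_ten (st_ten HJ1x (IH _ _ HD' Hw)) HJ2x.
Qed.

Lemma cap_go k E w : unrolled (en k) E -> size w = k -> step E (w ++ rev w) [::] (en k).
Proof.
elim: k E w => [|[|k] IH] E w HE.
- by move/size0nil ->; apply: (id_go (k := 0) HE).
- by case: w => [|x [|]] // _; apply: cap1_go.
case/lastP: w => [|w x] //; rewrite size_rcons => -[Hw].
case/unrolled_Seq_inv: HE => [P [E' [-> + HE']]].
case/unrolled_Ten_inv=> [T [J2 [-> /unrolled_Ten_inv [J1 [E1 [-> HJ1 HE1]]] HJ2]]].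
have -> : rcons w x ++ rev (rcons w x) = (w ++ [:: x; x]) ++ rev w.
  by rewrite rev_rcons -cats1 -!catA.
have HJ2w : size (rev w) = k.+1 by rewrite size_rev.
have S := st_ten (st_ten (id_go HJ1 Hw) (cap1_go x HE1)) (id_go HJ2 HJ2w).
by rewrite cats0 in S; apply: st_cut S (IH _ _ HE' Hw).
Qed.

(** * The bisimulations *)

(* Steps chained by the iota rules are matched by chaining the matching steps. *)
Lemma seq_simulation (Rel : term -> term -> Prop) :
  (forall S T, Rel S T -> exists s, has_sort env0 S s /\ has_sort env0 T s) ->
  (forall S T, Rel S T -> exists P R, S = Seq P R) ->
  (forall S T P R a c b Q S', Rel S T -> S = Seq P R -> step P a c Q -> step R c b S' ->
     exists2 T', step T a b T' & Rel (Seq Q S') T') ->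
  simulation Rel.
Proof.
move=> Rsort Rseq Rcut S T HST a b S' HS; elim: HS T HST => {S a b S'}.
- move=> S k l HS T HST; exists T => //.
  have [[k' l'] [/(has_sort_uniq HS) [<- <-] HT]] := Rsort _ _ HST.
  exact: st_refl HT.
- move=> P R Q m n a b _ IH1 _ IH2 T /IH1 [T1 S1 /IH2 [T2 S2 H2]].
  by exists T2 => //; apply: st_iotaL S1 S2.
- move=> P R Q m n a b _ IH1 _ IH2 T /IH1 [T1 S1 /IH2 [T2 S2 H2]].
  by exists T2 => //; apply: st_iotaR S1 S2.
- by move=> P Q R S a b c SP _ SR _ T HT; apply: Rcut HT erefl SP SR.
- by move=> P Q R S a b c d _ _ _ _ T /Rseq [? [? ?]].
- by move=> sigma u v P T /Rseq [? [? ?]].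
- by move=> Y t P a b Q _ _ T /Rseq [? [? ?]].
- by move=> P Q R S m n _ _ _ _ T /Rseq [? [? ?]].
- by move=> P R a b Q _ _ _ T /Rseq [? [? ?]].
- by move=> P R a b Q _ _ _ T /Rseq [? [? ?]].
Qed.

Inductive cup_rel k l : term -> term -> Prop :=
| CupRel X D J D' J' of has_sort env0 X (k, l) & unrolled (dn k) D & unrolled (Ik k) J
    & unrolled (dn l) D' & unrolled (Ik l) J' :
    cup_rel k l (Seq D (Ten X J)) (Seq D' (Ten J' (star X))).

Inductive cap_rel k l : term -> term -> Prop :=
| CapRel X J E J' E' of has_sort env0 X (k, l) & unrolled (Ik l) J & unrolled (en l) E
    & unrolled (Ik k) J' & unrolled (en k) E' :
    cap_rel k l (Seq (Ten X J) E) (Seq (Ten J' (star X)) E').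

Lemma cup_rel_sort k l S T : cup_rel k l S T ->
  has_sort env0 S (0, l + k) /\ has_sort env0 T (0, l + k).
Proof.
case=> X D J D' J' HX HD HJ HD' HJ'; split.
- exact: so_seq (unrolled_sort HD (dn_sort k)) (so_ten HX (unrolled_sort HJ (Ik_sort _ k))).
- apply: so_seq (unrolled_sort HD' (dn_sort l)) _.
  exact: so_ten (unrolled_sort HJ' (Ik_sort _ l)) (has_sort_star0 HX).
Qed.

Lemma cap_rel_sort k l S T : cap_rel k l S T ->
  has_sort env0 S (k + l, 0) /\ has_sort env0 T (k + l, 0).
Proof.
case=> X J E J' E' HX HJ HE HJ' HE'; split.
- exact: so_seq (so_ten HX (unrolled_sort HJ (Ik_sort _ l))) (unrolled_sort HE (en_sort l)).
- apply: so_seq _ (unrolled_sort HE' (en_sort k)).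
  exact: so_ten (unrolled_sort HJ' (Ik_sort _ k)) (has_sort_star0 HX).
Qed.

Lemma cup_sim k l : simulation (cup_rel k l).
Proof.
apply: seq_simulation.
- by move=> S T /cup_rel_sort []; exists (0, l + k).
- by move=> _ _ [X D J *]; exists D, (Ten X J).
move=> _ _ P R a c b Q S [X D J D' J' HX HD HJ HD' HJ'] [<- <-] SD ST.
have [[-> [w Hw Ec]] HQ] := cup_step HD SD.
rewrite Ec in ST.
have [b1 [b2 [X' [J2 [-> -> SX SJ]]]]] := step_Ten_split_top HX Hw ST.
have [<- _ HJ2] := id_step HJ SJ.
have [_ Hb1 HX'] := step_sort SX HX.
exists (Seq (dn l) (Ten (Ik l) (star X'))); last exact: CupRel.
exact: st_cut (cup_go HD' Hb1) (st_ten (id_go HJ' Hb1) (step_star SX)).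
Qed.

Lemma cup_sim_rev k l : simulation (fun S T => cup_rel k l T S).
Proof.
apply: seq_simulation.
- by move=> S T /cup_rel_sort []; exists (0, l + k).
- by move=> _ _ [X D J D' J' *]; exists D', (Ten J' (star X)).
move=> _ _ P R a c b Q S [X D J D' J' HX HD HJ HD' HJ'] [<- <-] SD ST.
have [[-> [w Hw Ec]] HQ] := cup_step HD' SD.
rewrite Ec in ST.
have [b1 [b2 [J2 [Y [-> -> SJ SY]]]]] :=
  step_Ten_split_top (unrolled_sort HJ' (Ik_sort _ l)) Hw ST.
have [<- _ HJ2] := id_step HJ' SJ.
have SX := step_star SY; rewrite starK revK in SX.
have [Hb2 _ HX'] := step_sort SX HX.
exists (Seq (dn k) (Ten (star Y) (Ik k))); last first.
  by rewrite -{2}(starK Y); apply: CupRel.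
have Hb2' : size b2 = k by rewrite -Hb2 size_rev.
have G := cup_go HD Hb2; rewrite revK in G.
exact: st_cut G (st_ten SX (id_go HJ Hb2')).
Qed.

Lemma cap_sim k l : simulation (cap_rel k l).
Proof.
apply: seq_simulation.
- by move=> S T /cap_rel_sort []; exists (k + l, 0).
- by move=> _ _ [X J E *]; exists (Ten X J), E.
move=> _ _ P R a c b Q S [X J E J' E' HX HJ HE HJ' HE'] [<- <-] ST SE.
have [[-> [w Hw Ec]] HS] := cap_step HE SE.
rewrite Ec in ST.
have [a1 [a2 [X' [J2 [-> -> SX SJ]]]]] := step_Ten_split_bot HX Hw ST.
have [-> _ HJ2] := id_step HJ SJ.
have [Ha1 _ HX'] := step_sort SX HX.
exists (Seq (Ten (Ik k) (star X')) (en k)); last exact: CapRel.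
exact: st_cut (st_ten (id_go HJ' Ha1) (step_star SX)) (cap_go HE' Ha1).
Qed.

Lemma cap_sim_rev k l : simulation (fun S T => cap_rel k l T S).
Proof.
apply: seq_simulation.
- by move=> S T /cap_rel_sort []; exists (k + l, 0).
- by move=> _ _ [X J E J' E' *]; exists (Ten J' (star X)), E'.
move=> _ _ P R a c b Q S [X J E J' E' HX HJ HE HJ' HE'] [<- <-] ST SE.
have [[-> [w Hw Ec]] HS] := cap_step HE' SE.
rewrite Ec in ST.
have [a1 [a2 [J2 [Y [-> -> SJ SY]]]]] :=
  step_Ten_split_bot (unrolled_sort HJ' (Ik_sort _ k)) Hw ST.
have [-> _ HJ2] := id_step HJ' SJ.
have SX := step_star SY; rewrite starK revK in SX.
have [_ Ha2 HX'] := step_sort SX HX.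
exists (Seq (Ten (star Y) (Ik l)) (en l)); last first.
  by rewrite -{2}(starK Y); apply: CapRel.
have Ha2' : size a2 = l by rewrite -Ha2 size_rev.
have G := cap_go HE Ha2; rewrite revK in G.
exact: st_cut (st_ten SX (id_go HJ Ha2')) G.
Qed.

End WireCalculus.

Unset Implicit Arguments.

Theorem mainTheorem7 (Sig : Type) (P : term Sig) (k l : nat) :
  wclosed P -> has_sort (@env0) P (k, l) ->
  bisim (Seq (dn Sig k) (Ten P (Ik Sig k))) (Seq (dn Sig l) (Ten (Ik Sig l) (star P))) /\
  bisim (Seq (Ten P (Ik Sig l)) (en Sig l)) (Seq (Ten (Ik Sig k) (star P)) (en Sig k)).
Proof.
move=> _ HP; split.
- exists (cup_rel k l); split; [| exact: cup_sim | exact: cup_sim_rev].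
  by apply: (CupRel HP); apply: unrolled_refl.
- exists (cap_rel k l); split; [| exact: cap_sim | exact: cap_sim_rev].
  by apply: (CapRel HP); apply: unrolled_refl.
Qed.
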